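(* Let $X$ be a nonnegative random variable with density $\pi(x)$ on $[0,\infty)$, and let $\delta>0$. Define the density $\pi'(x)=C(\delta x+1)^{-1/2}\pi(x)$ on $[0,\infty)$, where $C>0$ is the normalizing constant. If $\pi$ is heavy-tailed, then $\pi'$ is also heavy-tailed.
   Context: A density $f$ on $[0,\infty)$ is heavy-tailed if $\int_0^{\infty}f(x)e^{tx}\,dx=\infty$ for all $t>0$. *)

From HB Require Import structures.
From mathcomp Require Import all_boot all_order all_algebra.
From mathcomp Require Import all_classical all_reals all_analysis.
Set Implicit Arguments. Unset Strict Implicit. Unset Printing Implicit Defensive.
Import Order.TTheory GRing.Theory Num.Theory.
Import numFieldNormedType.Exports.
Local Open Scope classical_set_scope.
Local Open Scope ring_scope.
Local Open Scope ereal_scope.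

Definition is_density (R : realType) (f : R -> R) : Prop :=
  [/\ forall x : R, (0 <= x)%R -> (0 <= f x)%R,
      measurable_fun (`[0%R, +oo[%classic : set R) f &
      \int[@lebesgue_measure R]_(x in (`[0%R, +oo[%classic : set R)) (f x)%:E = 1].

Definition heavy_tailed (R : realType) (f : R -> R) : Prop :=
  forall t : R, (0 < t)%R ->
    \int[@lebesgue_measure R]_(x in (`[0%R, +oo[%classic : set R)) (f x * expR (t * x))%:E = +oo.

From HB Require Import structures.
From mathcomp Require Import all_boot all_order all_algebra.
From mathcomp Require Import all_classical all_reals all_analysis.
From mathcomp Require Import ring lra.
Import Order.TTheory GRing.Theory Num.Theory.
Import measurable_realfun.
Local Open Scope ring_scope.

(* The weight (delta x + 1)^(-1/2) decays only polynomially, so it costs at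
   most half of any exponential: for x >= 0,
   (delta x + 1)^(-1/2) e^(t x) >= e^(t x / 2) / (1 + 2 delta / t).
   Hence the moment generating integral of pi' at t dominates a positive
   multiple of that of pi at t / 2, which is infinite. *)

Section SqrtBound.
Local Set Implicit Arguments. Local Unset Strict Implicit.
Variable R : rcfType.

Lemma sqrtr_le_id (a : R) : 1 <= a -> Num.sqrt a <= a.
Proof.
move=> a1.
have s1 : 1 <= Num.sqrt a by rewrite -sqrtr1 ler_sqrt //; lra.
by rewrite -{2}(sqr_sqrtr (_ : 0 <= a)) ?expr2 ?ler_peMr //; lra.
Qed.

End SqrtBound.

Section ExponentialLowerBounds.
Local Set Implicit Arguments. Local Unset Strict Implicit.
Variable R : realType.

Lemma affine_le_expR (a t x : R) : 0 <= a -> 0 < t -> 0 <= x ->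
  a * x + 1 <= (1 + a / t) * expR (t * x).
Proof.
move=> a0 t0 x0.
have at0 : 0 <= a / t by rewrite divr_ge0 // ltW.
have tx0 : 0 <= t * x by rewrite mulr_ge0 // ltW.
apply: (@le_trans _ _ ((1 + a / t) * (1 + t * x))).
  have -> : (1 + a / t) * (1 + t * x) = a * x + 1 + t * x + a / t.
    by field; rewrite gt_eqF.
  lra.
by rewrite ler_wpM2l ?expR_ge1Dx //; lra.
Qed.

Lemma expR_half_le_invsqrt_expR (a t x : R) : 0 <= a -> 0 < t -> 0 <= x ->
  expR (t / 2 * x) / (1 + 2 * a / t) <= (Num.sqrt (a * x + 1))^-1 * expR (t * x).
Proof.
move=> a0 t0 x0.
set E := expR (t / 2 * x); set s := Num.sqrt (a * x + 1).
have E0 : 0 < E := expR_gt0 _.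
have ax1 : 1 <= a * x + 1 by rewrite lerDr mulr_ge0.
have s0 : 0 < s by rewrite sqrtr_gt0; lra.
have M0 : 0 < 1 + 2 * a / t.
  have : 0 <= 2 * a / t by rewrite divr_ge0 ?mulr_ge0 // ltW.
  lra.
have sME : s <= (1 + 2 * a / t) * E.
  have -> : 2 * a / t = a / (t / 2) by field; rewrite gt_eqF.
  apply: le_trans (sqrtr_le_id ax1) _.
  by rewrite affine_le_expR // divr_gt0.
have -> : expR (t * x) = E * E by rewrite -expRD; congr expR; field.
rewrite ler_pdivrMr //.
have -> : s^-1 * (E * E) * (1 + 2 * a / t) = E * ((1 + 2 * a / t) * E / s) by ring.
apply: ler_peMr; first exact: ltW.
by rewrite ler_pdivlMr // mul1r.
Qed.

End ExponentialLowerBounds.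

Section HeavyTailComparison.
Local Set Implicit Arguments. Local Unset Strict Implicit.
Variable R : realType.

Lemma measurable_fun_mulr_expR (D : set R) (f : R -> R) (t : R) :
  measurable_fun D f -> measurable_fun D (fun x => f x * expR (t * x)).
Proof.
move=> mf; apply: measurable_funM => //; apply: measurable_funTS.
exact: measurableT_comp (@measurable_expR R) (measurable_funM _ _).
Qed.

Local Notation D := (`[0%R, +oo[%classic : set R).

Lemma heavy_tailed_le (f g : R -> R) :
  (forall x, 0 <= x -> 0 <= f x) -> measurable_fun D f -> measurable_fun D g ->
  (forall t, 0 < t -> exists s c, [/\ 0 < s, 0 < c &
     forall x, 0 <= x -> c * (f x * expR (s * x)) <= g x * expR (t * x)]) ->
  heavy_tailed f -> heavy_tailed g.
Proof.
move=> f0 mf mg dom hf t t0.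
have [s [c [s0 c0 le_fg]]] := dom t t0.
have inD x : D x -> 0 <= x by rewrite /= in_itv /= andbT.
have fe0 x : D x -> (0 <= (f x * expR (s * x))%:E)%E.
  by move=> /inD x0; rewrite lee_fin mulr_ge0 ?f0 // ltW ?expR_gt0.
have mfe : measurable_fun D (EFin \o fun x => f x * expR (s * x)).
  by apply/measurable_EFinP; exact: measurable_fun_mulr_expR.
apply/eqP; rewrite -leye_eq.
rewrite -(gt0_muley (_ : (0 < c%:E)%E)) ?lte_fin // -(hf s s0).
rewrite -ge0_integralZl_EFin //; last exact: ltW.
apply: ge0_le_integral => //.
- by move=> x /fe0; apply: mule_ge0; rewrite lee_fin ltW.
- exact: emeasurable_funM.
- by apply/measurable_EFinP; exact: measurable_fun_mulr_expR.
- by move=> x /inD x0; rewrite -EFinM lee_fin le_fg.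
Qed.

End HeavyTailComparison.

Theorem lemma2 (R : realType) (pi : R -> R) (delta C : R) :
  is_density pi -> 0 < delta -> 0 < C ->
  is_density (fun x => C * (Num.sqrt (delta * x + 1))^-1 * pi x) ->
  heavy_tailed pi ->
  heavy_tailed (fun x => C * (Num.sqrt (delta * x + 1))^-1 * pi x).
Proof.
move=> [pi0 mpi _] delta0 C0 [_ mpi' _].
apply: heavy_tailed_le => // t t0.
have M0 : 0 < 1 + 2 * delta / t.
  have : 0 <= 2 * delta / t by rewrite divr_ge0 ?mulr_ge0 // ltW.
  lra.
exists (t / 2), (C / (1 + 2 * delta / t)); split; rewrite ?divr_gt0 //.
move=> x x0.
have -> : C / (1 + 2 * delta / t) * (pi x * expR (t / 2 * x)) =
          C * pi x * (expR (t / 2 * x) / (1 + 2 * delta / t)) by ring.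
have -> : C * (Num.sqrt (delta * x + 1))^-1 * pi x * expR (t * x) =
          C * pi x * ((Num.sqrt (delta * x + 1))^-1 * expR (t * x)) by ring.
apply: ler_wpM2l; first by rewrite mulr_ge0 ?pi0 // ltW.
exact: expR_half_le_invsqrt_expR (ltW delta0) t0 x0.
Qed.
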